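(* Let a binary game be given as described in the context, and suppose Assumptions (A1) and (A2) hold. A vector $(x_i,y_i)_{i\in I}$ with compensation $(\zeta_i)_{i\in I}$, $\zeta_i=\zeta_i^{(1)}+\zeta_i^{(0)}$, is a binary quasi-equilibrium if there exist vectors $\big(\widetilde y_i^{(1)},\widetilde y_i^{(0)},\widetilde\lambda_i^{(1)},\widetilde\lambda_i^{(0)},\kappa_i^{(1)},\kappa_i^{(0)},\zeta_i^{(1)},\zeta_i^{(0)}\big)_{i\in I}$ such that the combined point is a feasible point of problem (P) and, for each $i$, $\zeta_i$ is minimal in the sense of condition (3) of the definition of a binary quasi-equilibrium.
   Context: Binary game: players $i\in I=\{1,\dots,n\}$. Player $i$ chooses $x_i\in\{0,1\}$ and $y_i\in\mathbb{R}^m$ and solves $\min f_i(x_i,y_i,y_{-i})$ subject to $g_i(x_i,y_i)\le 0$, with $g_i:\{0,1\}\times\mathbb{R}^m\to\mathbb{R}^k$, $y_{-i}=(y_j)_{j\ne i}$; $K_i=\{(x_i,y_i):g_i(x_i,y_i)\le0\}$. Binary quasi-equilibrium: a vector $((x_i^*,y_i^* )\in K_i)_{i\in I}$ and compensations $\zeta_i\ge0$ such that for every $i$: (1) $y_i^*$ minimizes $f_i(x_i^*,\cdot,y_{-i}^* )$ over $\{y_i:g_i(x_i^*,y_i)\le0\}$; (2) $f_i(x_i^*,y_i^*,y_{-i}^* )-\zeta_i\le f_i(x_i^\times,y_i^\times,y_{-i}^* )$, where $x_i^\times=1-x_i^*$ and $y_i^\times$ minimizes $f_i(x_i^\times,\cdot,y_{-i}^*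 )$ over $\{y_i:g_i(x_i^\times,y_i)\le0\}$; (3) $\zeta_i$ is the minimal nonnegative number satisfying (2). Assumption (A1): for each $i$ and each fixed $x_i$ (and fixed $y_{-i}$), the KKT conditions of player $i$'s problem with respect to $y_i$ are necessary and sufficient, and $\{y_i:g_i(x_i,y_i)\le0\}$ is compact and non-empty. Assumption (A2): $F$ and $G$ (below) are convex quadratic or linear for every fixed value of the binary variables, and $\partial G/\partial\zeta_i>0$ for all $i$. Problem (P): with a sufficiently large constant $\widetilde K>0$, minimize $F((x_i,y_i)_{i\in I})+G((\zeta_i^{(1)},\zeta_i^{(0)})_{i\in I})$ over $x_i\in\{0,1\}$, $y_i,\widetilde y_i^{(1)},\widetilde y_i^{(0)}\in\mathbb{R}^m$, $\widetilde\lambda_i^{(1)},\widetilde\lambda_i^{(0)}\in\mathbb{R}^k_+$, $\kappa_i^{(1)},\kappa_i^{(0)},\zeta_i^{(1)},\zeta_i^{(0)}\in\mathbb{R}_+$, subject to, for all $i$ and $b\in\{0,1\}$: $\nabla_{y_i} f_i(b,\widetilde y_i^{(b)},y_{-i})+(\widetilde\lambda_i^{(b)})^T\nabla_{y_i} g_i(b,\widetilde y_i^{(b)})=0$; $0\le -g_i(b,\widetilde y_i^{(b)})\perp\widetilde\lambda_i^{(b)}\ge0$; $f_i(1,\widetilde y_i^{(1)},y_{-i})+\kappa_i^{(1)}-\zeta_i^{(1)}-\kappa_i^{(0)}+\zeta_i^{(0)}=f_i(0,\widetilde y_i^{(0)},y_{-i})$; $\kappa_i^{(1)}+\zeta_i^{(1)}\le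 x_i\widetilde K$; $\kappa_i^{(0)}+\zeta_i^{(0)}\le(1-x_i)\widetilde K$; $\widetilde y_i^{(0)}-x_i\widetilde K\le y_i\le\widetilde y_i^{(0)}+x_i\widetilde K$; $\widetilde y_i^{(1)}-(1-x_i)\widetilde K\le y_i\le\widetilde y_i^{(1)}+(1-x_i)\widetilde K$. *)

From HB Require Import structures.
From mathcomp Require Import all_boot all_order all_algebra.
From mathcomp Require Import all_classical all_reals all_analysis.
Set Implicit Arguments. Unset Strict Implicit. Unset Printing Implicit Defensive.
Import Order.TTheory GRing.Theory Num.Theory.
Import numFieldNormedType.Exports.
Local Open Scope classical_set_scope.
Local Open Scope ring_scope.

Section BinaryGame.
Variables (R : realType) (n m k : nat).

(* Player data.  f i b p = f_i(b, p i, p_{-i}) : the cost of player i is given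
   as a function of the binary choice b and the full profile p of continuous
   variables (p i playing the role of y_i, the others of y_{-i}). *)
Notation profile := ('I_n -> 'rV[R]_m).
Notation costs := ('I_n -> bool -> profile -> R).
Notation constrs := ('I_n -> bool -> 'rV[R]_m -> 'I_k -> R).

Definition upd (y : profile) (i : 'I_n) (z : 'rV[R]_m) : profile :=
  fun j => if j == i then z else y j.

Definition fi (f : costs) (i : 'I_n) (b : bool) (z : 'rV[R]_m) (y : profile) : R :=
  f i b (upd y i z).

Definition partial (h : 'rV[R]_m -> R) (z : 'rV[R]_m) (j : 'I_m) (d : R) : Prop :=
  is_derive (0 : R) (1 : R) (fun t : R => h (z + t *: delta_mx 0 j)) d.

Definition Kset (g : constrs) (i : 'I_n) (b : bool) : set 'rV[R]_m :=
  [set z | forall c, g i b z c <= 0].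

Definition is_min (h : 'rV[R]_m -> R) (S : set 'rV[R]_m) (z : 'rV[R]_m) : Prop :=
  S z /\ forall w, S w -> h z <= h w.

Definition KKT (f : costs) (g : constrs) (i : 'I_n) (b : bool) (y : profile)
    (z : 'rV[R]_m) (lam : 'I_k -> R) : Prop :=
  (exists (df : 'I_m -> R) (dg : 'I_k -> 'I_m -> R),
      (forall j, partial (fun w => fi f i b w y) z j (df j)) /\
      (forall c j, partial (fun w => g i b w c) z j (dg c j)) /\
      (forall j, df j + \sum_(c < k) lam c * dg c j = 0)) /\
  (forall c, 0 <= - g i b z c) /\ (forall c, 0 <= lam c) /\
  \sum_(c < k) (- g i b z c) * lam c = 0.

Definition A1 (f : costs) (g : constrs) : Prop :=
  forall (i : 'I_n) (b : bool) (y : profile),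
    (forall z, is_min (fun w => fi f i b w y) (Kset g i b) z <->
               exists lam, KKT f g i b y z lam) /\
    compact (Kset g i b) /\ Kset g i b !=set0.

Definition cvx_quad (I : finType) (h : (I -> R) -> R) : Prop :=
  exists (Q : I -> I -> R) (c : I -> R) (d : R),
    (forall v : I -> R, 0 <= \sum_a \sum_b Q a b * v a * v b) /\
    (forall v : I -> R, h v = \sum_a \sum_b Q a b * v a * v b + \sum_a c a * v a + d).

(* Assumption (A2) for the objective F((x_i,y_i)_i) + G((zeta1_i,zeta0_i)_i) of (P);
   a vector of compensations is zt : 'I_n -> bool -> R, zt i b = zeta_i^(b). *)
Definition A2 (F : ('I_n -> bool) -> profile -> R) (G : ('I_n -> bool -> R) -> R) : Prop :=
  (forall x : 'I_n -> bool,
     cvx_quad (fun v : 'I_n * 'I_m -> R => F x (fun i => \row_j v (i, j)))) /\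
  cvx_quad (fun v : 'I_n * bool -> R => G (fun i b => v (i, b))) /\
  (forall zt : 'I_n -> bool -> R, (forall i b, 0 <= zt i b) ->
     forall i b, exists d : R,
       is_derive (0 : R) (1 : R)
         (fun t : R => G (fun i' b' => zt i' b' + (if (i', b') == (i, b) then t else 0))) d
       /\ 0 < d).

Definition cond2 (f : costs) (g : constrs) (x : 'I_n -> bool) (y : profile)
    (i : 'I_n) (z : R) : Prop :=
  exists ycross : 'rV[R]_m,
    is_min (fun w => fi f i (~~ x i) w y) (Kset g i (~~ x i)) ycross /\
    fi f i (x i) (y i) y - z <= fi f i (~~ x i) ycross y.

Definition minimal2 (f : costs) (g : constrs) (x : 'I_n -> bool) (y : profile)
    (i : 'I_n) (z : R) : Prop :=
  forall z', 0 <= z' -> cond2 f g x y i z' -> z <= z'.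

Definition binary_quasi_eq (f : costs) (g : constrs) (x : 'I_n -> bool) (y : profile)
    (zeta : 'I_n -> R) : Prop :=
  forall i : 'I_n,
    Kset g i (x i) (y i) /\
    is_min (fun w => fi f i (x i) w y) (Kset g i (x i)) (y i) /\
    0 <= zeta i /\ cond2 f g x y i (zeta i) /\
    minimal2 f g x y i (zeta i).

(* feasibility for problem (P) with constant Kt.  Superscript (b) is the
   bool index: yt i b = ytilde_i^(b), lam i b = lambda_i^(b), etc. *)
Definition feasibleP (f : costs) (g : constrs) (Kt : R) (x : 'I_n -> bool) (y : profile)
    (yt : 'I_n -> bool -> 'rV[R]_m) (lam : 'I_n -> bool -> 'I_k -> R)
    (kappa zt : 'I_n -> bool -> R) : Prop :=
  forall i : 'I_n,
    (forall b, (forall c, 0 <= lam i b c) /\ 0 <= kappa i b /\ 0 <= zt i b) /\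
    (forall b, KKT f g i b y (yt i b) (lam i b)) /\
    fi f i true (yt i true) y + kappa i true - zt i true - kappa i false + zt i false
      = fi f i false (yt i false) y /\
    kappa i true + zt i true <= (x i)%:R * Kt /\
    kappa i false + zt i false <= (1 - (x i)%:R) * Kt /\
    (forall j, yt i false 0 j - (x i)%:R * Kt <= y i 0 j <= yt i false 0 j + (x i)%:R * Kt) /\
    (forall j, yt i true 0 j - (1 - (x i)%:R) * Kt <= y i 0 j
               <= yt i true 0 j + (1 - (x i)%:R) * Kt).

End BinaryGame.

From HB Require Import structures.
From mathcomp Require Import all_boot all_order all_algebra.
From mathcomp Require Import all_classical all_reals all_analysis.
Import Order.TTheory GRing.Theory Num.Theory.
Local Open Scope ring_scope.
From mathcomp Require Import lra.

(** For a feasible point of (P) the big-M constraints with multiplier [x i]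
   pin [y i] to the KKT point [yt i (x i)] of the chosen branch and force the
   slack [kappa] and compensation [zt] of the other branch to vanish, for every
   [Kt].  By (A1) both KKT points are optimal responses, so [y i] satisfies
   condition (1) and the equality constraint of (P) becomes condition (2) with
   compensation [zt i true + zt i false]. *)

Lemma row_le_anti (R : numDomainType) (m : nat) (u v : 'rV[R]_m) :
  (forall j, u 0 j <= v 0 j <= u 0 j) -> v = u.
Proof.
move=> uv; apply/rowP => j; apply/le_anti.
by have /andP[-> ->] := uv j.
Qed.

Lemma ge0_addr_le0 (R : numDomainType) (a b : R) :
  0 <= a -> 0 <= b -> a + b <= 0 -> a = 0 /\ b = 0.
Proof.
move=> a0 b0 ab0.
have /eqP : a + b = 0 by apply/le_anti; rewrite ab0 addr_ge0.
by rewrite paddr_eq0 // => /andP[/eqP -> /eqP ->].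
Qed.

Section FeasiblePoint.
Context {R : realType} {n m k : nat}.
Context {f : 'I_n -> bool -> ('I_n -> 'rV[R]_m) -> R}
        {g : 'I_n -> bool -> 'rV[R]_m -> 'I_k -> R}.
Context {Kt : R} {x : 'I_n -> bool} {y : 'I_n -> 'rV[R]_m}
        {yt : 'I_n -> bool -> 'rV[R]_m} {lam : 'I_n -> bool -> 'I_k -> R}
        {kappa zt : 'I_n -> bool -> R}.
Hypothesis feasible : feasibleP f g Kt x y yt lam kappa zt.
Variable i : 'I_n.

Lemma feasibleP_active_response : y i = yt i (x i).
Proof.
have [_ [_ [_ [_ [_ [box0 box1]]]]]] := feasible i.
apply: row_le_anti => j.
case: (x i) (box0 j) (box1 j) => /=;
  by rewrite ?subrr mul0r subr0 addr0.
Qed.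

Lemma feasibleP_inactive_vanish : kappa i (~~ x i) = 0 /\ zt i (~~ x i) = 0.
Proof.
have [sgn [_ [_ [bound1 [bound0 _]]]]] := feasible i.
have [_ [kappa_ge0 zt_ge0]] := sgn (~~ x i).
apply: ge0_addr_le0 => //.
by case: (x i) bound1 bound0 => /= bound1 bound0;
  [move: bound0 | move: bound1]; rewrite ?subrr ?mulr0n mul0r.
Qed.

Lemma feasibleP_compensation :
  fi f i (x i) (y i) y - (zt i true + zt i false)
    <= fi f i (~~ x i) (yt i (~~ x i)) y.
Proof.
have [sgn [_ [balance _]]] := feasible i.
have [_ [kappa1_ge0 _]] := sgn true.
have [_ [kappa0_ge0 _]] := sgn false.
have [kappa_inactive zt_inactive] := feasibleP_inactive_vanish.
rewrite feasibleP_active_response.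
by case: (x i) kappa_inactive zt_inactive => /= kappa_inactive zt_inactive; lra.
Qed.

Hypothesis kkt_optimal : A1 f g.

Lemma feasibleP_optimal_response (b : bool) :
  is_min (fun w => fi f i b w y) (Kset g i b) (yt i b).
Proof.
have [_ [kkt _]] := feasible i.
by apply/((kkt_optimal i b y).1 (yt i b)); exists (lam i b).
Qed.

End FeasiblePoint.

Theorem corollary1 (R : realType) (n m k : nat)
    (f : 'I_n -> bool -> ('I_n -> 'rV[R]_m) -> R)
    (g : 'I_n -> bool -> 'rV[R]_m -> 'I_k -> R)
    (F : ('I_n -> bool) -> ('I_n -> 'rV[R]_m) -> R)
    (G : ('I_n -> bool -> R) -> R) :
  A1 f g -> A2 F G ->
  exists K0 : R, 0 < K0 /\
  forall Kt : R, K0 <= Kt ->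
  forall (x : 'I_n -> bool) (y : 'I_n -> 'rV[R]_m)
         (yt : 'I_n -> bool -> 'rV[R]_m) (lam : 'I_n -> bool -> 'I_k -> R)
         (kappa zt : 'I_n -> bool -> R),
    feasibleP f g Kt x y yt lam kappa zt ->
    (forall i, minimal2 f g x y i (zt i true + zt i false)) ->
    binary_quasi_eq f g x y (fun i => zt i true + zt i false).
Proof.
(* (A2) only concerns the objective of (P); feasibility alone suffices. *)
move=> kkt_optimal _; exists 1; split => // Kt _ x y yt lam kappa zt feasible
  minimal i.
have optimal := feasibleP_optimal_response feasible i kkt_optimal.
have active := feasibleP_active_response feasible i.
have [sgn _] := feasible i.
have [_ [_ zt1_ge0]] := sgn true; have [_ [_ zt0_ge0]] := sgn false.
split; first by rewrite active; exact: (optimal (x i)).1.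
split; first by rewrite active; exact: optimal.
split; first exact: addr_ge0.
split; last exact: minimal.
exists (yt i (~~ x i)); split; first exact: optimal.
exact: feasibleP_compensation feasible i.
Qed.
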